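(* Let $N\ge 4$ and write $k(x)=2p(x)$. Then $p(N-2)=1$, $p(N-3)=0$, and for every $x\in\{0,\dots,N-4\}$, $$k(x)=\frac{(N-x)\,(N-x-1-k(x+1))}{(N-x-1)^2-k(x+1)}.$$ Moreover, for every $x\in\{0,\dots,N-2\}$, $2p(x)-1>0$ if $N-x$ is even and $2p(x)-1<0$ if $N-x$ is odd.
   Context: For $\sigma\in\mathcal{S}_N$, $\eta_1(\sigma)$ is the number of fixed points and $\eta_2(\sigma)$ the number of 2-cycles of $\sigma$; $\nu$ is the uniform measure on $\mathcal{S}_N$, and for $x\in\{0,\dots,N\}\setminus\{N-1\}$, $p(x)=\mathbb{E}_\nu[\eta_2\mid\eta_1=x]$. *)

From HB Require Import structures.
From mathcomp Require Import all_boot all_order all_algebra all_fingroup.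
Set Implicit Arguments. Unset Strict Implicit. Unset Printing Implicit Defensive.
Import GRing.Theory Num.Theory.

Definition eta1 (N : nat) (s : 'S_N) : nat := #|[set i : 'I_N | s i == i]|.

Definition eta2 (N : nat) (s : 'S_N) : nat :=
  #|[set c in porbits s | #|c| == 2]|.

(* p N x = E_nu[eta2 | eta1 = x] under the uniform measure nu on S_N:
   the average of eta2 over the permutations with exactly x fixed points.
   (Only meaningful when this set is nonempty, i.e. x <> N-1, x <= N.) *)
Definition p (N x : nat) : rat :=
  ((\sum_(s : 'S_N | eta1 s == x) (eta2 s)%:R) /
   (#|[set s : 'S_N | eta1 s == x]|)%:R)%R.

Definition k (N x : nat) : rat := (2 * p N x)%R.

From HB Require Import structures.
From mathcomp Require Import all_boot all_order all_algebra all_fingroup.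
From mathcomp Require Import ring lra zify.
Import Order.TTheory GRing.Theory Num.Theory.
Local Open Scope ring_scope.

(* Write !n for the number of derangements of an n-element set (the
   subfactorial, with !(n+1) = (n+1) !n + (-1)^(n+1)).  The proof is by
   exact counting in S_N:
   - a permutation of S_N with exactly x fixed points is a choice of the
     x-set of fixed points and a derangement of the rest, so there are
     'C(N, x) * !(N - x) of them;
   - summing eta2 over these permutations counts pairs (s, {i, j}) with
     {i, j} a 2-cycle of s; fixing the transposition leaves a permutation of
     the other N - 2 points with x fixed points, giving
     'C(N, 2) * 'C(N - 2, x) * !(N - 2 - x).
   Hence, with m = N - x - 2, k = 2p = (m+2)(m+1) !m / !(m+2), and the
   identity (m+2)(m+1) !m = !(m+2) + (m+1)(-1)^m turns this into the closed
   form k = 1 + (m+1)(-1)^m / !(m+2) (kform below).  All four claims of the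
   theorem are then elementary facts about kform: its values at m = 0, 1, its
   recursion in m, and the sign of kform m - 1. *)

Fixpoint subfact (n : nat) : rat :=
  if n is m.+1 then m.+1%:R * subfact m + (-1) ^+ m.+1 else 1.

Lemma subfactS n : subfact n.+1 = n.+1%:R * subfact n + (-1) ^+ n.+1.
Proof. by []. Qed.

Lemma subfact_ge1 n : 1 <= subfact n.+2.
Proof.
elim: n => [|n IH]; first by rewrite /=; lra.
rewrite subfactS -signr_odd -addn3 natrD.
have n_ge0 : 0 <= n%:R :> rat by rewrite ler0n.
by case: (odd _); rewrite ?expr1 ?expr0; nra.
Qed.

Lemma subfact_gt0 n : 0 < subfact n.+2.
Proof. exact: lt_le_trans (subfact_ge1 n). Qed.

Lemma subfact_neq0 n : subfact n.+2 != 0.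
Proof. by rewrite gt_eqF // subfact_gt0. Qed.

Lemma subfact_pair n :
  n.+2%:R * n.+1%:R * subfact n = subfact n.+2 + n.+1%:R * (-1) ^+ n.
Proof. rewrite !subfactS !exprS -!(natr1 n.+1) -!(natr1 n); ring. Qed.

(* Every permutation of an n-set is a derangement of the non-fixed points:
   sum_i 'C(n, i) !i = n!.  Proved from the recurrence and the vanishing of
   the alternating binomial sum. *)
Lemma sum_binom_subfact n : \sum_(i < n.+1) 'C(n, i)%:R * subfact i = n`!%:R.
Proof.
elim: n => [|n IH]; first by rewrite big_ord1 /= mul1r.
have alt : \sum_(i < n.+1) 'C(n.+1, i.+1)%:R * (-1) ^+ i.+1 = -1 :> rat.
  have := exprD1n (-1 : rat) n.+1.
  rewrite addNr expr0n big_ord_recl expr0 bin0 mulr1n /= => binom_alt.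
  apply: (addrI 1); rewrite subrr [RHS]binom_alt.
  by congr (_ + _); apply: eq_bigr => i _; rewrite mulr_natl.
rewrite big_ord_recl bin0 mul1r factS natrM -IH mulr_sumr.
rewrite (eq_bigr (fun i : 'I_n.+1 => n.+1%:R * ('C(n, i)%:R * subfact i)
                   + 'C(n.+1, i.+1)%:R * (-1) ^+ i.+1)); last first.
  move=> i _; rewrite lift0 subfactS mulrDr mulrA -natrM mulnC.
  by rewrite -mul_bin_diag natrM mulrA.
by rewrite big_split alt addrC (subrK 1).
Qed.

Lemma sum_binom_subfact_rev n :
  \sum_(i < n.+1) 'C(n, i)%:R * subfact (n - i) = n`!%:R.
Proof.
rewrite -sum_binom_subfact (reindex_inj rev_ord_inj) /=; apply: eq_bigr => i _.
by rewrite subSS bin_sub ?subKn // -ltnS.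
Qed.

Lemma bin_mul_fact n a b : (a + b <= n)%N ->
  ('C(n, a) * 'C(n - a, b) * (a`! * (b`! * (n - a - b)`!)) = n`!)%N.
Proof.
move=> abn; have an : (a <= n)%N by apply: leq_trans abn; rewrite leq_addr.
by rewrite -mulnA (mulnCA 'C(n - a, b)) bin_fact ?leq_subRL // bin_fact.
Qed.

Lemma bin_mulC n a b : (a + b <= n)%N ->
  ('C(n, a) * 'C(n - a, b) = 'C(n, b) * 'C(n - b, a))%N.
Proof.
move=> abn; have Fpos : (0 < a`! * (b`! * (n - a - b)`!))%N.
  by rewrite !muln_gt0 !fact_gt0.
apply/eqP; rewrite -(eqn_pmul2r Fpos) bin_mul_fact // (mulnCA a`!) subnAC.
by rewrite bin_mul_fact // addnC.
Qed.

(* Closed form of k N x as a function of m = N - x - 2. *)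
Definition kform (m : nat) : rat := 1 + m.+1%:R * (-1) ^+ m / subfact m.+2.

Lemma kform0 : kform 0 = 2.
Proof. by rewrite /kform /=; field. Qed.

Lemma kform1 : kform 1 = 0.
Proof. by rewrite /kform /=; field. Qed.

Lemma kform_sign m :
  (~~ odd m -> 0 < kform m - 1) /\ (odd m -> kform m - 1 < 0).
Proof.
have S_gt0 := subfact_gt0 m.
rewrite /kform addrAC subrr add0r -signr_odd.
case: (odd m); rewrite /= ?expr1 ?expr0 ?mulrN1 ?mulr1; split => // _.
  by rewrite mulNr oppr_lt0 divr_gt0.
by rewrite divr_gt0.
Qed.

(* The recursion of the theorem, in the variable m: with D = !(m+3) and
   e = (-1)^(m+1), both sides equal (m+4)(D - e) / ((m+4) D - e). *)
Lemma kform_rec m :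
  kform m.+2 = m.+4%:R * (m.+3%:R - kform m.+1) / (m.+3%:R ^+ 2 - kform m.+1).
Proof.
rewrite /kform; set D := subfact m.+3; set e : rat := (-1) ^+ m.+1.
have S4 : subfact m.+4 = m.+4%:R * D - e by rewrite subfactS /D /e !exprS; ring.
have sign2 : (-1) ^+ m.+2 = - e :> rat by rewrite /e exprS mulN1r.
have S4_neq0 := subfact_neq0 m.+2; have D_neq0 := subfact_neq0 m.+1.
rewrite S4 in S4_neq0 *; rewrite sign2 -/D -/e.
have n2 : m.+2%:R = m%:R + 2 :> rat by rewrite -addn2 natrD.
have n3 : m.+3%:R = m%:R + 3 :> rat by rewrite -addn3 natrD.
have n4 : m.+4%:R = m%:R + 4 :> rat by rewrite -addn4 natrD.
have m2_neq0 : m%:R + 2 != 0 :> rat by rewrite -n2 pnatr_eq0.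
rewrite n2 n3 n4 in S4_neq0 *.
have denom : (m%:R + 3) ^+ 2 - (1 + (m%:R + 2) * e / D)
             = (m%:R + 2) * ((m%:R + 4) * D - e) / D by field.
by rewrite denom; field; rewrite m2_neq0 D_neq0 S4_neq0.
Qed.

Section PermutationsWithFixedPoints.
Context {T : finType}.
Implicit Types (s : {perm T}) (A B C : {set T}).

Definition fixin s B : {set T} := [set i in B | s i == i].

Definition derangements_on C : {set {perm T}} :=
  [set s : {perm T} | perm_on C s & [forall i in C, s i != i]].

Lemma fixin_fiber B A s : A \subset B ->
  (perm_on B s && (fixin s B == A)) = (s \in derangements_on (B :\: A)).
Proof.
move=> sAB; rewrite inE; apply/idP/idP.
- case/andP=> onB /eqP <-; apply/andP; split.
    apply/subsetP=> y; rewrite inE => moved; rewrite !inE negb_and moved orbT.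
    exact: (subsetP onB y).
  by apply/forall_inP => y; rewrite !inE negb_and => /andP[/orP[] // /negP].
- case/andP=> onBA /forall_inP moves; apply/andP; split.
    exact: subset_trans onBA (subsetDl B A).
  apply/eqP/setP => y; rewrite !inE.
  have [yA | yA] := boolP (y \in A).
    by rewrite (subsetP sAB y yA) (out_perm onBA) ?eqxx // !inE yA.
  have [yB | //] := boolP (y \in B).
  by have := moves y; rewrite !inE yA yB /= => /(_ isT) /negbTE.
Qed.

Lemma card_perm_on_by_fixin B (R : pred nat) :
  #|[set s : {perm T} | perm_on B s & R #|fixin s B|]| =
  \sum_(A : {set T} | (A \subset B) && R #|A|) #|derangements_on (B :\: A)|.
Proof.
rewrite -sum1dep_card (partition_big (fixin^~ B)
  (fun A : {set T} => (A \subset B) && R #|A|)); last first.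
  by move=> s /andP[_ ->]; rewrite andbT; apply/subsetP=> y; rewrite inE => /andP[].
apply: eq_bigr => A /andP[sAB RA]; rewrite sum1dep_card; apply: eq_card => s.
rewrite -fixin_fiber // inE.
by case: (fixin s B =P A) => [->|]; rewrite ?RA ?andbT ?andbF.
Qed.

Lemma sum_const_subsets_card B x (c : rat) :
  \sum_(A : {set T} | (A \subset B) && (#|A| == x)) c = 'C(#|B|, x)%:R * c.
Proof.
rewrite sumr_const mulr_natl -cards_draws.
by congr (_ *+ _); apply: eq_card => A; rewrite inE.
Qed.

Lemma sum_subsets_by_card C (F : nat -> rat) :
  \sum_(A : {set T} | A \subset C) F #|A| =
  \sum_(x < #|C|.+1) 'C(#|C|, x)%:R * F x.
Proof.
rewrite (partition_big (fun A : {set T} => inord #|A| : 'I_#|C|.+1) xpredT) //.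
apply: eq_bigr => x _; rewrite -sum_const_subsets_card; apply: eq_big => [A|A].
  have [sAC /= | //] := boolP (A \subset C).
  by rewrite -(inj_eq val_inj) /= inordK // ltnS subset_leq_card.
by case/andP=> sAC /eqP <-; rewrite inordK // ltnS subset_leq_card.
Qed.

Lemma sum_card_derangements C :
  \sum_(A : {set T} | A \subset C) #|derangements_on (C :\: A)| = #|C|`!.
Proof.
rewrite -card_perm -(eq_bigl _ _ (fun A => andbT (A \subset C))).
rewrite -(card_perm_on_by_fixin C predT); apply: eq_card => s.
by rewrite !inE andbT.
Qed.

Lemma sum_subfact_subsets C :
  \sum_(A : {set T} | A \subset C) subfact #|C :\: A| = #|C|`!%:R.
Proof.
rewrite -sum_binom_subfact_rev -(sum_subsets_by_card C (fun a => subfact (#|C| - a))).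
by apply: eq_bigr => A /setIidPr sAC; rewrite cardsD sAC.
Qed.

(* The number of derangements of C is !#|C|: by strong induction, comparing
   the two previous identities, all terms but A = set0 cancel. *)
Lemma card_derangements C : #|derangements_on C|%:R = subfact #|C|.
Proof.
move Cn: #|C| => n; elim/ltn_ind: n C Cn => n IH C Cn; rewrite -Cn.
have : \sum_(A : {set T} | A \subset C)
         (#|derangements_on (C :\: A)|%:R - subfact #|C :\: A|) = 0.
  by rewrite sumrB sum_subfact_subsets -natr_sum sum_card_derangements subrr.
rewrite (bigD1 set0) ?sub0set // big1 /= ?addr0 ?setD0 => [/eqP|A /andP[sAC A0]].
  by rewrite subr_eq0 => /eqP.
rewrite (IH #|C :\: A|) ?subrr // cardsD (setIidPr sAC).
have := subset_leq_card sAC; rewrite -card_gt0 in A0; lia.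
Qed.

Lemma card_perm_on_nfix B x :
  #|[set s : {perm T} | perm_on B s & #|fixin s B| == x]|%:R
  = 'C(#|B|, x)%:R * subfact (#|B| - x) :> rat.
Proof.
rewrite (card_perm_on_by_fixin B (pred1 x)) natr_sum -sum_const_subsets_card.
apply: eq_bigr => A /andP[sAB /eqP Ax].
by rewrite card_derangements cardsD (setIidPr sAB) Ax.
Qed.

Lemma porbit_pair_image {s a b} : a != b -> porbit s a = [set a; b] -> s a = b.
Proof.
move=> ab Pab; have := porbit_traject s a b.
rewrite Pab cards2 ab set22 /= !inE eq_sym (negbTE ab) /=.
by move=> /esym /eqP.
Qed.

Lemma pair_in_porbits s i j : i != j ->
  ([set i; j] \in porbits s) = (s i == j) && (s j == i).
Proof.
move=> ij; apply/idP/andP => [/imsetP[y _ Py] | [/eqP sij /eqP sji]].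
  have Pi : porbit s i = [set i; j].
    by apply/eqP; rewrite Py eq_porbit_mem -Py set21.
  have Pj : porbit s j = [set j; i].
    by rewrite setUC; apply/eqP; rewrite Py eq_porbit_mem -Py set22.
  by rewrite (porbit_pair_image ij Pi) (porbit_pair_image _ Pj) 1?eq_sym ?eqxx.
apply/imsetP; exists i => //; apply/setP => y; apply/set2P/porbitP.
  by case=> ->; [exists 0%N; rewrite expg0 perm1 | exists 1%N; rewrite expg1].
case=> n ->; elim: n => [|n IH]; first by left; rewrite expg0 perm1.
by rewrite expgSr permM; case: IH => ->; [right | left].
Qed.

Lemma perm_off_pair {i j : T} {u : {perm T}} :
  perm_on (~: [set i; j]) u -> u i = i /\ u j = j.
Proof. by move=> onu; split; apply: (out_perm onu); rewrite !inE eqxx ?orbT. Qed.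

Lemma fix_swap_mul i j u : i != j -> perm_on (~: [set i; j]) u ->
  [set y | (tperm i j * u)%g y == y] = fixin u (~: [set i; j]).
Proof.
move=> ij /perm_off_pair[ui uj]; apply/setP => y; rewrite !inE permM.
have [->|yi] := eqVneq y i; first by rewrite tpermL uj eq_sym (negbTE ij).
have [->|yj] := eqVneq y j; first by rewrite tpermR ui (negbTE ij).
by rewrite tpermD // eq_sym.
Qed.

(* Permutations swapping i and j with x fixed points correspond, through
   s |-> (i j) s, to permutations of the complement of {i, j} with x fixed
   points. *)
Lemma card_perm_with_swap i j x : i != j ->
  #|[set s : {perm T} | (#|[set y | s y == y]| == x) && ((s i == j) && (s j == i))]|
  = #|[set s : {perm T} | perm_on (~: [set i; j]) s & #|fixin s (~: [set i; j])| == x]|.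
Proof.
move=> ij; set t := tperm i j; rewrite -[RHS](card_imset _ (mulgI t)).
apply: eq_card => s; apply/idP/imsetP.
- rewrite inE => /andP[sx /andP[/eqP sij /eqP sji]].
  have ts : s = (t * (t * s))%g by rewrite mulgA tperm2 mul1g.
  have onts : perm_on (~: [set i; j]) (t * s)%g.
    apply/subsetP => y; rewrite inE permM !inE; apply: contraR.
    by rewrite negbK => /orP[] /eqP ->; rewrite ?tpermL ?tpermR ?sij ?sji.
  by exists (t * s)%g; rewrite // inE onts -fix_swap_mul // -ts.
- case=> u; rewrite inE => /andP[onu ux] ->; have [ui uj] := perm_off_pair onu.
  by rewrite inE fix_swap_mul // ux !permM tpermL tpermR ui uj !eqxx.
Qed.

End PermutationsWithFixedPoints.

Lemma card_eta1 N x :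
  #|[set s : 'S_N | eta1 s == x]|%:R = 'C(N, x)%:R * subfact (N - x) :> rat.
Proof.
have := card_perm_on_nfix [set: 'I_N] x; rewrite cardsT card_ord => <-.
congr _%:R; apply: eq_card => s; rewrite !inE /eta1.
have -> : fixin s [set: 'I_N] = [set i | s i == i] by apply/setP => i; rewrite !inE.
suff -> : perm_on [set: 'I_N] s by [].
by apply/subsetP => i; rewrite inE.
Qed.

(* The numerator of p, by double counting pairs (s, 2-cycle of s). *)
Lemma sum_eta2 N x :
  \sum_(s : 'S_N | eta1 s == x) (eta2 s)%:R
  = 'C(N, 2)%:R * ('C(N - 2, x)%:R * subfact (N - 2 - x)) :> rat.
Proof.
have double_count : (\sum_(s : 'S_N | eta1 s == x) eta2 s =
    \sum_(P : {set 'I_N} | #|P| == 2)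
      #|[set s : 'S_N | (eta1 s == x) && (P \in porbits s)]|)%N.
  under eq_bigr => s _ do rewrite /eta2 -sum1dep_card.
  rewrite (exchange_big_dep (fun P : {set 'I_N} => #|P| == 2)) /=; last first.
    by move=> s P _ /andP[].
  apply: eq_bigr => P P2; rewrite -sum1dep_card; apply: eq_bigl => s.
  by rewrite P2 andbT.
rewrite -natr_sum double_count natr_sum.
rewrite (eq_bigr (fun _ => 'C(N - 2, x)%:R * subfact (N - 2 - x))); last first.
  move=> P /cards2P[i [j [ij ->]]].
  have cardC : #|~: [set i; j]| = (N - 2)%N.
    by have := cardsC [set i; j]; rewrite cards2 ij card_ord; lia.
  rewrite -cardC -card_perm_on_nfix -card_perm_with_swap //; congr _%:R.
  by apply: eq_card => s; rewrite !inE pair_in_porbits.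
rewrite (eq_bigl (fun P : {set 'I_N} => (P \subset [set: 'I_N]) && (#|P| == 2))).
  by rewrite sum_const_subsets_card cardsT card_ord.
by move=> P; rewrite subsetT.
Qed.

Lemma k_closed {N x m : nat} : (N - x)%N = m.+2 -> k N x = kform m.
Proof.
move=> Nx; have x2N : (2 + x <= N)%N by lia.
have binC : 'C(N, 2)%:R * 'C(N - 2, x)%:R = 'C(N, x)%:R * 'C(m.+2, 2)%:R :> rat.
  by rewrite -!natrM bin_mulC // Nx.
have bin2E : 'C(m.+2, 2)%:R = m.+2%:R * m.+1%:R / 2 :> rat.
  have := mul_bin_diag m.+2 1; rewrite bin1 /= => diag.
  by rewrite -natrM diag natrM mulrC mulKf.
have binNx : 'C(N, x)%:R != 0 :> rat by rewrite pnatr_eq0 -lt0n bin_gt0; lia.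
have S_neq0 := subfact_neq0 m.
rewrite /kform -[X in _ = X + _](divff S_neq0) -mulrDl -subfact_pair.
rewrite /k /p sum_eta2 card_eta1 Nx (_ : (N - 2 - x)%N = m); last by lia.
by rewrite mulrA binC bin2E; field; rewrite binNx S_neq0.
Qed.

Lemma p_halfk N x : p N x = k N x / 2.
Proof. by rewrite /k [RHS]mulrC mulKf. Qed.

Theorem mainTheorem6 (N : nat) (hN : (4 <= N)%N) :
  [/\ p N (N - 2) = 1,
      p N (N - 3) = 0,
      (forall x : nat, (x <= N - 4)%N ->
         k N x = ((N - x)%:R * ((N - x - 1)%:R - k N x.+1)) /
                 ((N - x - 1)%:R ^+ 2 - k N x.+1))
    & (forall x : nat, (x <= N - 2)%N ->
         (~~ odd (N - x) -> 0 < 2 * p N x - 1) /\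
         (odd (N - x) -> 2 * p N x - 1 < 0))].
Proof.
split.
- by rewrite p_halfk (@k_closed _ _ 0) ?kform0 ?divff //; lia.
- by rewrite p_halfk (@k_closed _ _ 1) ?kform1 ?mul0r //; lia.
- move=> x x_le; set m := (N - x - 4)%N.
  have Nx : (N - x)%N = m.+4 by lia.
  have Nx1 : (N - x.+1)%N = m.+3 by lia.
  by rewrite (k_closed Nx) (k_closed Nx1) kform_rec Nx subn1.
- move=> x x_le; set m := (N - x - 2)%N; have Nx : (N - x)%N = m.+2 by lia.
  by rewrite -/(k N x) (k_closed Nx) Nx /= !negbK; apply: kform_sign.
Qed.
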